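(* Under algorithm ERGO with $\kappa\le1/18$ and $\epsilon<1/12$, for every iteration $i\ge0$, $B_i\le N_i/(18(1-\epsilon))$, where $B_i$ and $N_i$ denote respectively the number of bad IDs and the total number of IDs in the system at the end of iteration $i$.
   Context: Resource model. IDs are good (follow the protocol) or bad (controlled by a single adversary). A $k$-hard challenge imposes a cost $k$ on its solver. A round is the time to solve a $1$-hard challenge plus communication with the server. In any single round in which all IDs are solving challenges, the adversary can solve at most a $\kappa$-fraction of the challenges. In any round, at most an $\epsilon$-fraction of the good IDs depart. Joins and departures occur at distinct times; every joining ID is new. ERGO (run by a server, with GoodJEst running in parallel and providing a current estimate $\tilde J$ of the good join rate): initially, the system consists of the IDs that returned a valid solution to a $1$-hard challenge (this is the end of iteration $0$). Each subsequent iteration starts at some time $\tau$ with system $S(\tau)$; during it, every joining ID must solve a challenge of hardness $1$ plus the number of IDs that joined in the last $1/\tilde J$ seconds of the current iteration (the entrance cost). When the number of joining plus departing IDs in the iteration exceeds $|S(\tau)|/11$, a purge is performed: all IDs are issued a $1$-hard challenge, the system is reset to the IDs that solve it within one round, and the next iteration begins. *)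

From HB Require Import structures.
From mathcomp Require Import all_boot all_order all_algebra.
From mathcomp Require Import finmap.
Set Implicit Arguments. Unset Strict Implicit. Unset Printing Implicit Defensive.
Import Order.TTheory GRing.Theory Num.Theory.
Local Open Scope fset_scope.
Local Open Scope ring_scope.

(* IDs live in a type [ID]; [good x] says that ID x is good (follows the
   protocol); the others are bad (controlled by the single adversary). *)
Definition good_ids {ID : choiceType} (good : pred ID) (A : {fset ID}) :=
  [fset x in A | good x].
Definition bad_ids {ID : choiceType} (good : pred ID) (A : {fset ID}) :=
  [fset x in A | ~~ good x].

(* The round that ends an iteration of ERGO (the initial 1-hard challenge
   for iteration 0, the purge for iteration i >= 1):
   - P : the IDs that are issued a 1-hard challenge in that round
         (the system / initial joiners when the round starts);
   - D : the IDs that depart during that round;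
   - S : the IDs that return a valid solution within the round, i.e. the
         system at the end of the iteration.
   Constraints from the model:
   - the system is reset to IDs that solved: S is contained in P and
     departed IDs are not in the system;
   - good IDs follow the protocol: every good ID of P that does not depart
     solves its 1-hard challenge within the round;
   - at most an eps-fraction of the good IDs depart in the round;
   - all IDs are solving challenges in that round, so the adversary solves
     at most a kappa-fraction of the challenges solved in it, namely of the
     challenges of the good IDs plus those solved by the adversary. *)
Definition ergo_end_round {R : numDomainType} {ID : choiceType}
    (good : pred ID) (kappa eps : R) (P D S : {fset ID}) : Prop :=
  [/\ S `<=` P,
      S `&` D = fset0,
      (forall x, x \in P -> good x -> x \notin D -> x \in S),
      (#|` good_ids good (P `&` D)|%:R <= eps * #|` good_ids good P|%:R) &
      (#|` bad_ids good S|%:R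
         <= kappa * (#|` good_ids good P|%:R + #|` bad_ids good S|%:R))].

Definition N_ids {ID : choiceType} (S : {fset ID}) : nat := #|` S|.
Definition B_ids {ID : choiceType} (good : pred ID) (S : {fset ID}) : nat :=
  #|` bad_ids good S|.

From HB Require Import structures.
From mathcomp Require Import all_boot all_order all_algebra.
From mathcomp Require Import finmap.
From mathcomp Require Import lra.
Set Implicit Arguments. Unset Strict Implicit.
Import Order.TTheory GRing.Theory Num.Theory.
Local Open Scope fset_scope.
Local Open Scope ring_scope.

(* The bound only concerns the round that ends iteration i, so
   it is proved for a single round.  Write g for the number of good IDs
   challenged in the round, g_S and g_D for those that end in the system
   and those that depart, and b for the bad IDs of the system.
   - The adversary's share of solved challenges gives b <= kappa (g + b),
     hence 17 b <= g when kappa <= 1/18.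
   - Every good ID that does not depart stays, so g <= g_S + g_D, and at
     most an eps-fraction departs, hence (1 - eps) g <= g_S.
   Chaining, 18 (1 - eps) b <= (1 - eps) g + b <= g_S + b = N, which is the
   claim. *)

Lemma card_good_bad (ID : choiceType) (good : pred ID) (A : {fset ID}) :
  #|` A| = (#|` good_ids good A| + #|` bad_ids good A|)%N.
Proof.
have cover : good_ids good A `|` bad_ids good A = A.
  by apply/fsetP => x; rewrite !inE; case: (x \in A); case: (good x).
have disjoint : good_ids good A `&` bad_ids good A = fset0.
  by apply/fsetP => x; rewrite !inE; case: (x \in A); case: (good x).
by rewrite -(cardfsUI (good_ids good A)) cover disjoint cardfs0 addn0.
Qed.

Lemma card_good_survivors (ID : choiceType) (good : pred ID)
    (P D S : {fset ID}) :
  (forall x, x \in P -> good x -> x \notin D -> x \in S) ->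
  (#|` good_ids good P|
     <= #|` good_ids good S| + #|` good_ids good (P `&` D)|)%N.
Proof.
move=> stays.
have cover : good_ids good P `<=` good_ids good S `|` good_ids good (P `&` D).
  apply/fsubsetP => x; rewrite !inE => /andP[xP gx].
  case xD: (x \in D); first by rewrite xP gx orbT.
  by rewrite (stays x xP gx) ?xD // gx.
by apply: leq_trans (fsubset_leq_card cover) _; rewrite -cardfsUI leq_addr.
Qed.

Section RoundInequalities.
Variable R : realFieldType.

Lemma bad_vs_good (kappa b g : R) :
  0 <= kappa -> kappa <= 1 / 18 -> 0 <= g ->
  b <= kappa * (g + b) -> 17 * b <= g.
Proof. by move=> *; nra. Qed.

Lemma good_retained (eps g g_S g_D : R) :
  g <= g_S + g_D -> g_D <= eps * g -> (1 - eps) * g <= g_S.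
Proof. by move=> *; lra. Qed.

Lemma bad_fraction (eps b g g_S : R) :
  0 <= eps -> eps < 1 -> 0 <= b ->
  17 * b <= g -> (1 - eps) * g <= g_S -> 18 * (1 - eps) * b <= g_S + b.
Proof. by move=> *; nra. Qed.

End RoundInequalities.

Lemma ergo_round_bad_bound (R : realFieldType) (ID : choiceType)
    (good : pred ID) (kappa eps : R) (P D S : {fset ID}) :
  0 <= kappa -> kappa <= 1 / 18 -> 0 <= eps -> eps < 1 / 12 ->
  ergo_end_round good kappa eps P D S ->
  (B_ids good S)%:R <= (N_ids S)%:R / (18 * (1 - eps)).
Proof.
move=> k0 k1 e0 e1 [_ _ stays departed adversary].
have covered := card_good_survivors stays.
rewrite -(ler_nat R) natrD in covered.
have retained := good_retained covered departed.
have few_bad := bad_vs_good k0 k1 (ler0n _ _) adversary.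
have eps_lt1 : eps < 1 by lra.
have ratio := bad_fraction e0 eps_lt1 (ler0n _ _) few_bad retained.
rewrite /B_ids /N_ids (card_good_bad good S) natrD ler_pdivlMr; last by lra.
by rewrite mulrC; exact: ratio.
Qed.

Theorem lemma8 (R : realFieldType) (ID : choiceType) (good : pred ID)
    (kappa eps : R) (P D S : nat -> {fset ID}) :
  0 <= kappa -> kappa <= 1 / 18 -> 0 <= eps -> eps < 1 / 12 ->
  (forall i : nat, ergo_end_round good kappa eps (P i) (D i) (S i)) ->
  forall i : nat,
    (B_ids good (S i))%:R <= (N_ids (S i))%:R / (18 * (1 - eps)).
Proof.
move=> k0 k1 e0 e1 rounds i.
exact: ergo_round_bad_bound k0 k1 e0 e1 (rounds i).
Qed.
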